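(* Let $(X,(\cdot,\cdot|\cdot))$ be a 2-inner product space over $\mathbb{K}\in\{\mathbb{R},\mathbb{C}\}$, let $n$ be a positive integer, let $x,y_1,\dots,y_n,z\in X$ and $c_1,\dots,c_n\in\mathbb{K}$. Then $\big|\sum_{i=1}^n c_i(x,y_i|z)\big|^2$ is bounded above by each of the following four quantities: (a) $\|x|z\|^2\sum_{i=1}^n|c_i|^2\Big\{\max_{1\le i\le n}\|y_i|z\|^2+\big(\sum_{1\le i\ne j\le n}|(y_i,y_j|z)|^2\big)^{1/2}\Big\}$; (b) $\|x|z\|^2\max_{1\le i\le n}|c_i|^2\Big\{\sum_{i=1}^n\|y_i|z\|^2+\sum_{1\le i\ne j\le n}|(y_i,y_j|z)|\Big\}$; (c) for any $p>1$, $\frac1p+\frac1q=1$: $\|x|z\|^2\big(\sum_{i=1}^n|c_i|^{2p}\big)^{1/p}\Big\{\big(\sum_{i=1}^n\|y_i|z\|^{2q}\big)^{1/q}+(n-1)^{1/p}\big(\sum_{1\le i\ne j\le n}|(y_i,y_j|z)|^{q}\big)^{1/q}\Big\}$; (d) $\|x|z\|^2\sum_{i=1}^n|c_i|^2\Big\{\max_{1\le i\le n}\|y_i|z\|^2+(n-1)\max_{1\le i\ne j\le n}|(y_i,y_j|z)|\Big\}$.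
   Context: A 2-inner product on a linear space $X$ of dimension greater than $1$ over $\mathbb{K}$ ($\mathbb{K}=\mathbb{R}$ or $\mathbb{C}$) is a function $(\cdot,\cdot|\cdot):X\times X\times X\to\mathbb{K}$ such that for all $x,x',y,z\in X$ and $\alpha\in\mathbb{K}$: (i) $(x,x|z)\ge 0$, and $(x,x|z)=0$ iff $x$ and $z$ are linearly dependent; (ii) $(x,x|z)=(z,z|x)$; (iii) $(y,x|z)=\overline{(x,y|z)}$; (iv) $(\alpha x,y|z)=\alpha(x,y|z)$; (v) $(x+x',y|z)=(x,y|z)+(x',y|z)$. The associated 2-norm is $\|x|z\|=\sqrt{(x,x|z)}$. Sums and maxima indexed by $1\le i\ne j\le n$ run over all ordered pairs $(i,j)$ with $i\ne j$. *)

From HB Require Import structures.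
From mathcomp Require Import all_boot all_order all_algebra.
From mathcomp Require Import all_classical all_reals exp.
From mathcomp Require Import complex.

Set Implicit Arguments.
Unset Strict Implicit.
Unset Printing Implicit Defensive.

Import Order.TTheory GRing.Theory Num.Theory.
Local Open Scope ring_scope.

Definition lin_dep (K : nzRingType) (X : lmodType K) (x z : X) : Prop :=
  exists a b : K, (a != 0 \/ b != 0) /\ a *: x + b *: z = 0.

(* A 2-inner product on X (a linear space of dimension > 1 over K),
   [conj] being the conjugation of K (identity for K = R). *)
Record is_2inner (K : numDomainType) (conj : K -> K) (X : lmodType K)
    (ip : X -> X -> X -> K) : Prop := {
  ip_dim : exists x z : X, ~ lin_dep x z;
  ip_ge0 : forall x z : X, 0 <= ip x x z;
  ip_eq0 : forall x z : X, ip x x z = 0 <-> lin_dep x z;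
  ip_sym : forall x z : X, ip x x z = ip z z x;
  ip_conj : forall x y z : X, ip y x z = conj (ip x y z);
  ip_scal : forall (a : K) (x y z : X), ip (a *: x) y z = a * ip x y z;
  ip_add : forall x x' y z : X, ip (x + x') y z = ip x y z + ip x' y z }.

(* the four bounds of Corollary 3.2; [absK] is the (real-valued) modulus on K *)
Definition cor32_bounds (R : realType) (K : numDomainType) (absK : K -> R)
    (X : lmodType K) (ip : X -> X -> X -> K) (n : nat)
    (x : X) (y : 'I_n -> X) (z : X) (c : 'I_n -> K) : Prop :=
  let nrm (u v : X) : R := Num.sqrt (absK (ip u u v)) in
  let lhs := absK (\sum_(i < n) c i * ip x (y i) z) ^+ 2 in
  let nx2 := nrm x z ^+ 2 in
  [/\
      lhs <= nx2 * (\sum_(i < n) absK (c i) ^+ 2) *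
             (\big[Num.max/0]_(i < n) nrm (y i) z ^+ 2 +
              Num.sqrt (\sum_(i < n) \sum_(j < n | i != j)
                          absK (ip (y i) (y j) z) ^+ 2)),
      lhs <= nx2 * (\big[Num.max/0]_(i < n) absK (c i) ^+ 2) *
             (\sum_(i < n) nrm (y i) z ^+ 2 +
              \sum_(i < n) \sum_(j < n | i != j) absK (ip (y i) (y j) z)),
      (forall p q : R, 1 < p -> p^-1 + q^-1 = 1 ->
        lhs <= nx2 * (\sum_(i < n) absK (c i) `^ (2 * p)) `^ p^-1 *
               ((\sum_(i < n) nrm (y i) z `^ (2 * q)) `^ q^-1 +
                (n - 1)%:R `^ p^-1 *
                (\sum_(i < n) \sum_(j < n | i != j)
                   absK (ip (y i) (y j) z) `^ q) `^ q^-1))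
    &
      lhs <= nx2 * (\sum_(i < n) absK (c i) ^+ 2) *
             (\big[Num.max/0]_(i < n) nrm (y i) z ^+ 2 +
              (n - 1)%:R * \big[Num.max/0]_(i < n)
                             \big[Num.max/0]_(j < n | i != j)
                                absK (ip (y i) (y j) z))].

From HB Require Import structures.
From mathcomp Require Import all_boot all_order all_algebra.
From mathcomp Require Import all_classical all_reals exp.
From mathcomp Require Import complex.
From mathcomp Require Import hoelder.
From mathcomp Require Import ring.

Import Order.TTheory GRing.Theory Num.Theory.
Set Implicit Arguments.
Unset Strict Implicit.
Unset Printing Implicit Defensive.
Local Open Scope ring_scope.

(* For fixed z, (. , . | z) is a semi-inner product, so it satisfies the
   Cauchy-Schwarz inequality.  Applied to x and u = sum_i conj(c_i) y_i it gives
   |sum_i c_i (x, y_i | z)|^2 <= ||x|z||^2 ||u|z||^2, and expanding ||u|z||^2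
   with the triangle inequality bounds it by
   sum_i |c_i|^2 ||y_i|z||^2 + sum_(i <> j) |c_i| |c_j| |(y_i, y_j | z)|.
   The four estimates are then purely real inequalities on this quantity:
   Cauchy-Schwarz on the off-diagonal part for (a), |c_i| |c_j| <= max |c|^2
   for (b), Hoelder on both parts together with
   sum_(i <> j) w_i w_j <= (n - 1) sum_i w_i^2 for (c), and the latter inequality
   with the off-diagonal entries bounded by their maximum for (d). *)

Section FiniteHoelder.
Variable R : realType.

Lemma powRVK (s p : R) : 0 <= s -> 0 < p -> (s `^ p^-1) `^ p = s.
Proof. by move=> s0 p0; rewrite -powRrM mulVf ?gt_eqF // powRr1. Qed.

Lemma hoelder_sum (I : Type) (r : seq I) (P : pred I) (u v : I -> R) (p q : R) :
  (forall k, 0 <= u k) -> (forall k, 0 <= v k) -> 0 < p -> 0 < q ->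
  p^-1 + q^-1 = 1 ->
  \sum_(k <- r | P k) u k * v k <=
  (\sum_(k <- r | P k) u k `^ p) `^ p^-1 * (\sum_(k <- r | P k) v k `^ q) `^ q^-1.
Proof.
move=> u0 v0 p0 q0 pq; elim: r => [|k r IH].
  by rewrite !big_nil mulr_ge0 ?powR_ge0.
rewrite !big_cons; case: (P k) => //.
apply: le_trans (lerD (lexx _) IH) _.
set Su := \sum_(k <- r | P k) u k `^ p; set Sv := \sum_(k <- r | P k) v k `^ q.
have Su0 : 0 <= Su by rewrite sumr_ge0 // => i; rewrite powR_ge0.
have Sv0 : 0 <= Sv by rewrite sumr_ge0 // => i; rewrite powR_ge0.
have := hoelder2 (u0 k) (powR_ge0 Su p^-1) (v0 k) (powR_ge0 Sv q^-1) p0 q0 pq.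
by rewrite !powRVK.
Qed.

Lemma cauchy_schwarz_sum (I : Type) (r : seq I) (P : pred I) (u v : I -> R) :
  (forall k, 0 <= u k) -> (forall k, 0 <= v k) ->
  \sum_(k <- r | P k) u k * v k <=
  Num.sqrt (\sum_(k <- r | P k) u k ^+ 2) * Num.sqrt (\sum_(k <- r | P k) v k ^+ 2).
Proof.
move=> u0 v0; have half : (2 : R)^-1 + 2^-1 = 1 by field.
have sq w : (forall k, 0 <= w k) ->
    \sum_(k <- r | P k) w k `^ 2 = \sum_(k <- r | P k) w k ^+ 2.
  by move=> w0; apply: eq_bigr => k _; rewrite powR_mulrn.
have := hoelder_sum r P u0 v0 (ltr0Sn _ 1) (ltr0Sn _ 1) half.
by rewrite !sq // -!powR12_sqrt // sumr_ge0 // => k _; rewrite sqr_ge0.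
Qed.

End FiniteHoelder.

Lemma sum_offdiag_const_l (V : zmodType) n (f : 'I_n -> V) :
  \sum_(i < n) \sum_(j < n | i != j) f i = (\sum_(i < n) f i) *+ (n - 1).
Proof.
rewrite -sumrMnl; apply: eq_bigr => i _.
rewrite (eq_bigl (mem (predC1 i))) => [|j]; last by rewrite !inE eq_sym.
by rewrite sumr_const cardC1 card_ord subn1.
Qed.

Lemma sum_offdiag_const_r (V : zmodType) n (f : 'I_n -> V) :
  \sum_(i < n) \sum_(j < n | i != j) f j = (\sum_(i < n) f i) *+ (n - 1).
Proof.
rewrite (exchange_big_dep xpredT) //= -sum_offdiag_const_l.
by apply: eq_bigr => j _; apply: eq_bigl => i; rewrite eq_sym.
Qed.

Lemma sum_offdiag_mul_le (R : realDomainType) n (w : 'I_n -> R) :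
  \sum_(i < n) \sum_(j < n | i != j) w i * w j <=
  (\sum_(i < n) w i ^+ 2) *+ (n - 1).
Proof.
rewrite -(ler_pMn2r (_ : 0 < 2)%N) // [X in _ <= X]mulr2n.
rewrite -{1}sum_offdiag_const_l -sum_offdiag_const_r -big_split.
rewrite -sumrMnl; apply: ler_sum => i _; rewrite -sumrMnl -big_split.
apply: ler_sum => j _.
by have := sqr_ge0 (w i - w j); rewrite sqrrB addrAC subr_ge0.
Qed.

(* With C = |c|, m i = ||y_i|z|| and a i j = |(y_i, y_j | z)|, this is the
   triangle-inequality bound on ||sum_i conj(c_i) y_i | z||^2. *)
Definition gram_majorant (R : pzRingType) n (C m : 'I_n -> R)
    (a : 'I_n -> 'I_n -> R) : R :=
  \sum_(i < n) C i ^+ 2 * m i ^+ 2 +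
  \sum_(i < n) \sum_(j < n | i != j) C i * C j * a i j.

Section GramMajorantBounds.
Variables (R : realType) (n : nat) (C m : 'I_n -> R) (a : 'I_n -> 'I_n -> R).
Hypotheses (C0 : forall i, 0 <= C i) (a0 : forall i j, 0 <= a i j).

Lemma sum_diag_le_max :
  \sum_(i < n) C i ^+ 2 * m i ^+ 2 <=
  (\sum_(i < n) C i ^+ 2) * \big[Num.max/0]_(i < n) m i ^+ 2.
Proof.
rewrite mulr_suml; apply: ler_sum => i _; rewrite ler_wpM2l ?sqr_ge0 //.
exact: (le_bigmax 0 (fun i => m i ^+ 2)).
Qed.

Lemma sum_offdiag_sqr_le :
  \sum_(k : 'I_n * 'I_n | k.1 != k.2) (C k.1 * C k.2) ^+ 2 <=
  (\sum_(i < n) C i ^+ 2) ^+ 2.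
Proof.
under eq_bigr do rewrite exprMn.
rewrite expr2 big_distrlr pair_big /= [X in _ <= X](bigID (fun k => k.1 != k.2)) /=.
by rewrite lerDl sumr_ge0 // => k _; rewrite mulr_ge0 ?sqr_ge0.
Qed.

Lemma gram_majorant_le_cauchy_schwarz :
  gram_majorant C m a <= (\sum_(i < n) C i ^+ 2) *
    (\big[Num.max/0]_(i < n) m i ^+ 2 +
     Num.sqrt (\sum_(i < n) \sum_(j < n | i != j) a i j ^+ 2)).
Proof.
rewrite /gram_majorant mulrDr lerD ?sum_diag_le_max //.
rewrite (pair_big_dep xpredT (fun i j => i != j) (fun i j => C i * C j * a i j)).
rewrite (pair_big_dep xpredT (fun i j => i != j) (fun i j => a i j ^+ 2)) /=.
apply: le_trans (cauchy_schwarz_sum _ _ (u := fun k => C k.1 * C k.2)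
  (v := fun k => a k.1 k.2) (fun k => mulr_ge0 (C0 _) (C0 _)) (fun k => a0 _ _)) _.
rewrite ler_wpM2r ?sqrtr_ge0 //.
have SC0 : 0 <= \sum_(i < n) C i ^+ 2 by rewrite sumr_ge0 // => i _; rewrite sqr_ge0.
rewrite -[X in _ <= X](ger0_norm SC0) -sqrtr_sqr ler_sqrt ?sqr_ge0 //.
exact: sum_offdiag_sqr_le.
Qed.

Lemma gram_majorant_le_max_coef :
  gram_majorant C m a <= \big[Num.max/0]_(i < n) C i ^+ 2 *
    (\sum_(i < n) m i ^+ 2 + \sum_(i < n) \sum_(j < n | i != j) a i j).
Proof.
set M := \big[Num.max/0]_(i < n) C i ^+ 2.
have CM i : C i ^+ 2 <= M by exact: (le_bigmax 0 (fun i => C i ^+ 2)).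
rewrite /gram_majorant mulrDr !mulr_sumr lerD //.
  by apply: ler_sum => i _; rewrite ler_wpM2r ?sqr_ge0.
apply: ler_sum => i _; rewrite mulr_sumr; apply: ler_sum => j _.
rewrite ler_wpM2r //.
have := sqr_ge0 (C i - C j); rewrite sqrrB addrAC subr_ge0 mulr2n => CC.
by rewrite -(ler_pMn2r (_ : 0 < 2)%N) // mulr2n (le_trans CC) ?lerD.
Qed.

Lemma gram_majorant_le_max_offdiag :
  gram_majorant C m a <= (\sum_(i < n) C i ^+ 2) *
    (\big[Num.max/0]_(i < n) m i ^+ 2 +
     (n - 1)%:R * \big[Num.max/0]_(i < n) \big[Num.max/0]_(j < n | i != j) a i j).
Proof.
rewrite /gram_majorant mulrDr lerD ?sum_diag_le_max //.
set M := \big[Num.max/0]_(i < n) _.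
have aM i j : i != j -> a i j <= M.
  move=> ij; apply: le_trans (le_bigmax 0 _ i).
  exact: (le_bigmax_cond 0 (fun j => a i j) ij).
have M0 : 0 <= M by apply: bigmax_ge_id.
apply: (@le_trans _ _ (\sum_(i < n) \sum_(j < n | i != j) C i * C j * M)).
  by do 2 (apply: ler_sum => ? ?); rewrite ler_wpM2l ?mulr_ge0 ?aM.
under eq_bigr do rewrite -mulr_suml.
rewrite -mulr_suml mulrA [_ * _%:R]mulrC mulr_natl ler_wpM2r //.
exact: sum_offdiag_mul_le.
Qed.

Lemma gram_majorant_le_hoelder (p q : R) : (forall i, 0 <= m i) ->
  1 < p -> p^-1 + q^-1 = 1 ->
  gram_majorant C m a <= (\sum_(i < n) C i `^ (2 * p)) `^ p^-1 *
    ((\sum_(i < n) m i `^ (2 * q)) `^ q^-1 +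
     (n - 1)%:R `^ p^-1 *
     (\sum_(i < n) \sum_(j < n | i != j) a i j `^ q) `^ q^-1).
Proof.
move=> m0 p1 pq; have p0 : 0 < p by apply: lt_trans p1.
have q0 : 0 < q.
  by rewrite -invr_gt0 -[q^-1](addKr p^-1) pq addrC subr_gt0 invf_lt1.
have powR2 (w : 'I_n -> R) s : (forall i, 0 <= w i) ->
    \sum_(i < n) w i `^ (2 * s) = \sum_(i < n) (w i ^+ 2) `^ s.
  by move=> w0; apply: eq_bigr => i _; rewrite powRrM powR_mulrn.
rewrite /gram_majorant mulrDr lerD //.
  rewrite (powR2 C p C0) (powR2 m q m0).
  exact: hoelder_sum (fun i => sqr_ge0 _) (fun i => sqr_ge0 _) p0 q0 pq.
rewrite (pair_big_dep xpredT (fun i j => i != j) (fun i j => C i * C j * a i j)).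
rewrite (pair_big_dep xpredT (fun i j => i != j) (fun i j => a i j `^ q)) /=.
apply: le_trans (hoelder_sum _ _ (u := fun k => C k.1 * C k.2) (v := fun k => a k.1 k.2)
  (fun k => mulr_ge0 (C0 _) (C0 _)) (fun k => a0 _ _) p0 q0 pq) _.
rewrite mulrCA mulrA ler_wpM2r ?powR_ge0 //.
have powR_sum_ge0 (I : finType) (P : pred I) (w : I -> R) s :
  0 <= \sum_(k | P k) w k `^ s by rewrite sumr_ge0 // => k _; rewrite powR_ge0.
rewrite -powRM ?powR_sum_ge0 //.
apply: ge0_ler_powR.
- by rewrite invr_ge0 ltW.
- by rewrite nnegrE; apply: powR_sum_ge0.
- by rewrite nnegrE mulr_ge0 ?powR_sum_ge0.
rewrite -(pair_big_dep xpredT (fun i j => i != j) (fun i j => (C i * C j) `^ p)) /=.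
under [in X in _ <= X]eq_bigr => i _ do rewrite mulrC powRrM powR_mulrn ?powR_ge0 //.
rewrite mulr_natl; apply: le_trans (sum_offdiag_mul_le (fun i => C i `^ p)).
by do 2 (apply: ler_sum => ? ?); rewrite powRM.
Qed.

End GramMajorantBounds.

Section TwoInnerProduct.
Variables (K : numDomainType) (conj : {rmorphism K -> K}).
Hypotheses (conjK : involutive conj) (mulrJ : forall a, a * conj a = `|a| ^+ 2).
Variables (X : lmodType K) (ip : X -> X -> X -> K).
Hypothesis ipP : is_2inner conj ip.

Lemma normrJ a : `|conj a| = `|a|.
Proof.
by apply/eqP; rewrite -(eqrXn2 (_ : 0 < 2)%N) ?normr_ge0 // -!mulrJ conjK mulrC.
Qed.

Lemma ip0l y z : ip 0 y z = 0.
Proof. by rewrite -(scale0r 0) (ip_scal ipP) mul0r. Qed.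

Lemma ip_suml (I : Type) (r : seq I) (P : pred I) (F : I -> X) y z :
  ip (\sum_(i <- r | P i) F i) y z = \sum_(i <- r | P i) ip (F i) y z.
Proof.
exact: (big_morph (fun v => ip v y z) (fun u w => ip_add ipP u w y z) (ip0l y z)).
Qed.

Lemma ip_sumr (I : Type) (r : seq I) (P : pred I) (F : I -> X) x z :
  ip x (\sum_(i <- r | P i) F i) z = \sum_(i <- r | P i) ip x (F i) z.
Proof.
rewrite (ip_conj ipP) ip_suml rmorph_sum.
by apply: eq_bigr => i _; rewrite -(ip_conj ipP).
Qed.

Lemma ipZr a x y z : ip x (a *: y) z = conj a * ip x y z.
Proof. by rewrite (ip_conj ipP) (ip_scal ipP) rmorphM -(ip_conj ipP). Qed.

Lemma ipDr x y y' z : ip x (y + y') z = ip x y z + ip x y' z.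
Proof. by rewrite (ip_conj ipP) (ip_add ipP) rmorphD -!(ip_conj ipP). Qed.

Lemma ip_selfJ x z : conj (ip x x z) = ip x x z.
Proof. by rewrite -(ip_conj ipP). Qed.

Lemma ip_combination s t u v z :
  ip (s *: u + t *: v) (s *: u + t *: v) z =
  s * conj s * ip u u z + s * conj t * ip u v z +
  t * conj s * ip v u z + t * conj t * ip v v z.
Proof. by rewrite (ip_add ipP) !(ip_scal ipP) !ipDr !ipZr; ring. Qed.

Lemma ip_cauchy_schwarz_gt0 x y z : 0 < ip y y z ->
  `|ip x y z| ^+ 2 <= ip x x z * ip y y z.
Proof.
move=> B0; set a := ip x y z; set w := ip y y z *: x + (- a) *: y.
have ba : ip y x z = conj a by rewrite (ip_conj ipP).
have Ew : ip w w z = ip y y z * (ip x x z * ip y y z - a * conj a).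
  by rewrite /w ip_combination rmorphN ip_selfJ ba -/a; ring.
have := ip_ge0 ipP w z.
by rewrite Ew pmulr_rge0 // subr_ge0 mulrJ.
Qed.

Lemma ip_cauchy_schwarz x y z : `|ip x y z| ^+ 2 <= ip x x z * ip y y z.
Proof.
have [B0|B0] := eqVneq (ip y y z) 0; last first.
  by rewrite ip_cauchy_schwarz_gt0 // lt0r B0 (ip_ge0 ipP).
have [A0|A0] := eqVneq (ip x x z) 0; last first.
  rewrite mulrC (ip_conj ipP) normrJ ip_cauchy_schwarz_gt0 //.
  by rewrite lt0r A0 (ip_ge0 ipP).
set a := ip x y z; set w := x + (- a) *: y.
have ba : ip y x z = conj a by rewrite (ip_conj ipP).
have Ew : ip w w z = - (a * conj a) *+ 2.
  rewrite /w -[x in x + _]scale1r ip_combination rmorphN rmorph1 ba -/a A0 B0.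
  by ring.
have := ip_ge0 ipP w z.
by rewrite Ew mulrJ A0 mul0r pmulrn_lge0 // oppr_ge0.
Qed.

Lemma ip_lincomb_sqr_le n x (y : 'I_n -> X) z (c : 'I_n -> K) :
  `|\sum_(i < n) c i * ip x (y i) z| ^+ 2 <=
  `|ip x x z| * (\sum_(i < n) `|c i| ^+ 2 * `|ip (y i) (y i) z| +
     \sum_(i < n) \sum_(j < n | i != j) `|c i| * `|c j| * `|ip (y i) (y j) z|).
Proof.
pose u := \sum_(i < n) conj (c i) *: y i.
have ip_u w : ip w u z = \sum_(j < n) c j * ip w (y j) z.
  by rewrite ip_sumr; apply: eq_bigr => j _; rewrite ipZr conjK.
rewrite -ip_u; apply: le_trans (ip_cauchy_schwarz x u z) _.
rewrite (ger0_norm (ip_ge0 ipP x z)) ler_wpM2l ?(ip_ge0 ipP) //.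
rewrite -(ger0_norm (ip_ge0 ipP u z)) {1}/u ip_suml.
apply: le_trans (ler_norm_sum _ _ _) _.
rewrite -big_split /=; apply: ler_sum => i _.
rewrite (ip_scal ipP) ip_u normrM normrJ.
apply: le_trans (ler_wpM2l (normr_ge0 _) (ler_norm_sum _ _ _)) _.
rewrite (bigD1 i) //= mulrDr normrM mulrA -expr2 lerD // mulr_sumr.
rewrite [X in X <= _](eq_bigl (fun j => i != j)) => [|j]; last by rewrite eq_sym.
by apply: ler_sum => j _; rewrite normrM mulrA.
Qed.

End TwoInnerProduct.

Section RealValuedModulus.
Variables (R : realType) (K : numDomainType).
Variables (emb : {rmorphism R -> K}) (absK : K -> R).
Hypotheses (normrE : forall w, `|w| = emb (absK w))
  (ler_emb : {mono emb : r s / r <= s}).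

Lemma absK_ge0 w : 0 <= absK w.
Proof. by rewrite -ler_emb rmorph0 -normrE. Qed.

Lemma ip_lincomb_sqr_le_gram_majorant (conj : {rmorphism K -> K})
    (X : lmodType K) (ip : X -> X -> X -> K) n x (y : 'I_n -> X) z (c : 'I_n -> K) :
  is_2inner conj ip -> involutive conj -> (forall a, a * conj a = `|a| ^+ 2) ->
  absK (\sum_(i < n) c i * ip x (y i) z) ^+ 2 <=
  Num.sqrt (absK (ip x x z)) ^+ 2 *
  gram_majorant (fun i => absK (c i)) (fun i => Num.sqrt (absK (ip (y i) (y i) z)))
    (fun i j => absK (ip (y i) (y j) z)).
Proof.
move=> ipP conjK mulrJ.
have embE w : emb (absK w) = `|w| by rewrite normrE.
rewrite sqr_sqrtr ?absK_ge0 // -ler_emb rmorphXn rmorphM rmorphD !rmorph_sum !embE.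
under [X in _ <= _ * (X + _)]eq_bigr => i _ do
  rewrite rmorphM rmorphXn sqr_sqrtr ?absK_ge0 // !embE.
under [X in _ <= _ * (_ + X)]eq_bigr => i _ do
  (rewrite rmorph_sum; under eq_bigr => j _ do rewrite !rmorphM !embE).
exact: ip_lincomb_sqr_le.
Qed.

Lemma is_2inner_cor32_bounds (conj : {rmorphism K -> K})
    (X : lmodType K) (ip : X -> X -> X -> K) n x (y : 'I_n -> X) z (c : 'I_n -> K) :
  is_2inner conj ip -> involutive conj -> (forall a, a * conj a = `|a| ^+ 2) ->
  cor32_bounds absK ip x y z c.
Proof.
move=> ipP conjK mulrJ.
have key := ip_lincomb_sqr_le_gram_majorant x y z c ipP conjK mulrJ.
rewrite /cor32_bounds /=.
split => [||p q p1 pq|]; rewrite -mulrA (le_trans key) // ler_wpM2l ?sqr_ge0 //.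
- by apply: gram_majorant_le_cauchy_schwarz => *; apply: absK_ge0.
- by apply: gram_majorant_le_max_coef => *; apply: absK_ge0.
- by apply: gram_majorant_le_hoelder => // *; rewrite ?sqrtr_ge0 ?absK_ge0.
- by apply: gram_majorant_le_max_offdiag => *; apply: absK_ge0.
Qed.

End RealValuedModulus.

Theorem corollary3p2 :
  (forall (R : realType) (X : lmodType R) (ip : X -> X -> X -> R),
     is_2inner (fun a : R => a) ip ->
     forall (n : nat) (x : X) (y : 'I_n -> X) (z : X) (c : 'I_n -> R),
       (0 < n)%N -> cor32_bounds (fun a : R => `|a|) ip x y z c) /\
  (forall (R : realType) (X : lmodType R[i]) (ip : X -> X -> X -> R[i]),
     is_2inner (@conjc R) ip ->
     forall (n : nat) (x : X) (y : 'I_n -> X) (z : X) (c : 'I_n -> R[i]),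
       (0 < n)%N -> cor32_bounds (@ComplexField.Normc.normc R) ip x y z c).
Proof.
split=> R X ip ipP n x y z c _.
- apply: (@is_2inner_cor32_bounds R R idfun _ _ _ idfun) => // a.
  by rewrite real_normK ?num_real // expr2.
- apply: (@is_2inner_cor32_bounds R R[i] (real_complex R) _ _ (@lecR R) conjc) => //.
    exact: conjcK.
  by move=> a; rewrite sqr_normc.
Qed.
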